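(* Let $m\in\mathbb{N}$ and let $\alpha_1,\dots,\alpha_n\in\mathbb{C}$ be $m$-th roots of unity. Let $q_1$ be the smallest prime factor of $m$, and let $k\in\mathbb{N}$ satisfy $q_1>\max\{n,k\}$. Then $\alpha_1^k+\alpha_2^k+\cdots+\alpha_n^k\neq 0$.
   Context: $\mathbb{N}$ denotes the set of positive integers. The $\alpha_i$ need not be distinct. *)

(* complex numbers are modelled by algC (algebraic complex
   numbers); roots of unity are algebraic, so nothing is lost. *)
From HB Require Import structures.
From mathcomp Require Import all_boot all_order all_algebra all_field.
Set Implicit Arguments.
Unset Strict Implicit.
Unset Printing Implicit Defensive.

From HB Require Import structures.
From mathcomp Require Import all_boot all_order all_algebra all_field.
Set Implicit Arguments.
Unset Strict Implicit.
Unset Printing Implicit Defensive.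
Import GRing.Theory Num.Theory.
Local Open Scope ring_scope.

(* Put b_i := alpha_i ^+ k; these are again m-th roots of
   unity, in particular nonzero, and sum to 0 by assumption.
   1. Galois step: for every t coprime to m there is an automorphism of algC
      sending each m-th root of unity z to z ^+ t, so the t-th power sum
      \sum_i b_i ^+ t vanishes as well.  Every 0 < t < pdiv m is coprime
      to m, hence the power sums p_1, ..., p_n all vanish (n < pdiv m).
   2. Algebraic step: in a ring of characteristic 0, if p_1 = ... = p_n = 0
      for n elements b_i, then all b_i are 0.  Indeed, if b_0 != 0, take the
      polynomial Q of degree < n vanishing exactly at the values of b other
      than b_0; then \sum_i b_i Q(b_i) is a combination of p_1, ..., p_n,
      hence 0, but it also equals c * b_0 Q(b_0) with c > 0 the number of
      i with b_i = b_0.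
   The theorem follows since the b_i are nonzero. *)

(* Integers strictly between 0 and the least prime divisor of m are coprime
   to m: their gcd with m would otherwise have a prime factor dividing m. *)
Lemma coprime_lt_pdiv (m t : nat) :
  (0 < t)%N -> (t < pdiv m)%N -> coprime t m.
Proof.
move=> t_gt0 t_lt_pdiv; rewrite /coprime eqn_leq gcdn_gt0 t_gt0 andbT leqNgt.
apply/negP => /pdiv_min_dvd/(_ (dvdn_gcdr t m)) pdiv_le_gcd.
have gcd_le_t : (gcdn t m <= t)%N := dvdn_leq t_gt0 (dvdn_gcdl t m).
by have := leq_trans pdiv_le_gcd gcd_le_t; rewrite leqNgt t_lt_pdiv.
Qed.

(* A vanishing sum of m-th roots of unity stays a vanishing sum after raising
   every term to a power t coprime to m (apply a Galois automorphism). *)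
Lemma unity_root_sum_powers_eq0 (m t : nat) (I : finType) (beta : I -> algC) :
  (forall i, m.-unity_root (beta i)) -> coprime t m ->
  \sum_i beta i = 0 -> \sum_i beta i ^+ t = 0.
Proof.
move=> beta_root coprime_tm sum0; have [u u_pow] := Qn_aut_exists coprime_tm.
transitivity (u (\sum_i beta i)); last by rewrite sum0 rmorph0.
rewrite rmorph_sum; apply: eq_bigr => i _.
by rewrite u_pow //; apply/eqP; rewrite -unity_rootE.
Qed.

Section PowerSums.

Variables (R : numDomainType) (n : nat) (b : 'I_n -> R).

Hypothesis (d : nat) (power_sum0 : forall t, (0 < t <= d)%N -> \sum_i b i ^+ t = 0).

(* Then \sum_i b_i Q(b_i) = 0 for every polynomial Q of degree < d: expanding
   Q, this sum is a linear combination of p_1, ..., p_d. *)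
Lemma sum_mul_horner_eq0 (Q : {poly R}) :
  (size Q <= d)%N -> \sum_i b i * Q.[b i] = 0.
Proof.
move=> sizeQ; transitivity (\sum_(j < size Q) Q`_j * \sum_i b i ^+ j.+1).
  under [RHS]eq_bigr do rewrite mulr_sumr.
  rewrite exchange_big /=; apply: eq_bigr => i _.
  rewrite horner_coef mulr_sumr; apply: eq_bigr => j _.
  by rewrite exprS mulrCA.
by apply: big1 => j _; rewrite power_sum0 ?mulr0 // (leq_trans (ltn_ord j)).
Qed.

Lemma power_sums_eq0 : (n <= d)%N -> forall i0, b i0 = 0.
Proof.
move=> n_le_d i0; apply/eqP/negPn/negP => b0_neq0; set b0 := b i0 in b0_neq0.
pose s := [seq x <- [seq b i | i <- enum 'I_n] | x != b0].
pose Q := \prod_(x <- s) ('X - x%:P).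
have Q_root x : (Q.[x] == 0) = (x \in s) by rewrite -root_prod_XsubC.
have size_s : (size s < n)%N.
  rewrite size_filter -[X in (_ < X)%N](size_enum_ord n) -(size_map b).
  rewrite -(count_predC (fun x => x != b0)) -ltn_subLR // subnn -has_count.
  by apply/hasP; exists b0; [apply: map_f; rewrite mem_enum | rewrite /= negbK].
have sum_eq0 : \sum_i b i * Q.[b i] = 0.
  by apply: sum_mul_horner_eq0; rewrite size_prod_XsubC (leq_trans size_s).
have sum_eq : \sum_i b i * Q.[b i] = (b0 * Q.[b0]) *+ #|[pred i | b i == b0]|.
  rewrite (bigID (fun i => b i == b0)) /= [X in _ + X]big1 ?addr0.
    by rewrite -sumr_const; apply: eq_bigr => i /eqP ->.
  move=> i b_neq; apply/eqP; rewrite mulf_eq0 Q_root mem_filter b_neq.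
  by rewrite map_f ?mem_enum ?orbT.
have card_gt0 : (0 < #|[pred i | b i == b0]|)%N.
  by apply/card_gt0P; exists i0; rewrite inE /= eqxx.
move: sum_eq; rewrite sum_eq0 => /eqP; rewrite eq_sym mulrn_eq0 eqn0Ngt card_gt0.
by rewrite mulf_eq0 (negbTE b0_neq0) Q_root mem_filter eqxx.
Qed.

End PowerSums.

Theorem lemma2p3 (m n k : nat) (hm : (0 < m)%N) (hn : (0 < n)%N) (hk : (0 < k)%N)
  (alpha : 'I_n -> algC) (halpha : forall i, m.-unity_root (alpha i))
  (hq : (maxn n k < pdiv m)%N) :
  \sum_(i < n) alpha i ^+ k != 0.
Proof.
apply/eqP => sum0; pose b i := alpha i ^+ k.
have b_root i : m.-unity_root (b i).
  have := halpha i; rewrite !unity_rootE => /eqP alpha_m.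
  by rewrite -exprM mulnC exprM alpha_m expr1n.
have n_lt_pdiv : (n < pdiv m)%N by apply: leq_ltn_trans hq; rewrite leq_maxl.
have power_sum0 t : (0 < t <= n)%N -> \sum_i b i ^+ t = 0.
  case/andP=> t_gt0 t_le_n; apply: unity_root_sum_powers_eq0 b_root _ sum0.
  exact: coprime_lt_pdiv t_gt0 (leq_ltn_trans t_le_n n_lt_pdiv).
have b0_eq0 := power_sums_eq0 power_sum0 (leqnn n) (Ordinal hn).
have := b_root (Ordinal hn); rewrite unity_rootE b0_eq0 expr0n.
by rewrite eqn0Ngt hm eq_sym oner_eq0.
Qed.
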